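(* For every $n\geq 1$, all vertex degrees in the Fibonacci-sum set-graph $G^F_{A^{(n)}}$ are even.
   Context: Let $\mathcal{F}=\{f_m\}_{m\ge 0}$ be the Fibonacci numbers, $f_0=0$, $f_1=1$, $f_m=f_{m-1}+f_{m-2}$. The Fibonacci-sum set-graph $G^F_{A^{(n)}}$ is the multigraph (loops and multiple edges allowed) whose vertices are in bijection with the nonempty subsets of $A^{(n)}=\{1,\dots,n\}$; between the vertices corresponding to distinct subsets $S,T$ there is one edge for each pair $(i',j')$ with $i'\in S$, $j'\in T$, $i'\neq j'$ and $i'+j'\in\mathcal{F}$, and at the vertex corresponding to $S$ there is one loop for each pair of distinct elements $i',j'\in S$ with $i'+j'\in\mathcal{F}$. The degree of a vertex $v$ is $2l(v)+\sum_{u\neq v}\epsilon(v,u)$, where $l(v)$ is the number of loops at $v$ and $\epsilon(v,u)$ the number of edges between $v$ and $u$. *)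

From mathcomp Require Import all_boot.
From Stdlib Require Import ClassicalEpsilon.
Set Implicit Arguments. Unset Strict Implicit. Unset Printing Implicit Defensive.

Fixpoint fib (m : nat) : nat :=
  match m with
  | 0 => 0
  | 1 => 1
  | (m'.+1 as k).+1 => fib k + fib m'
  end.

Definition inFib (k : nat) : bool :=
  if excluded_middle_informative (exists m, fib m = k) then true else false.

(* A^(n) = {1,...,n} is represented by 'I_n, element i : 'I_n standing for i+1.
   Vertices of G^F_{A^(n)} are the nonempty S : {set 'I_n}. *)
Definition elt n (i : 'I_n) : nat := i.+1.

(* l(S): loops at S, one per unordered pair of distinct elements i', j' of S
   with i' + j' Fibonacci (counted as pairs with i' < j'). *)
Definition loops n (S : {set 'I_n}) : nat :=
  #|[set p : 'I_n * 'I_n | [&& (p.1 < p.2)%N, p.1 \in S, p.2 \in S &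
                             inFib (elt p.1 + elt p.2)]]|.

Definition edges n (S T : {set 'I_n}) : nat :=
  #|[set p : 'I_n * 'I_n | [&& p.1 \in S, p.2 \in T, p.1 != p.2 &
                             inFib (elt p.1 + elt p.2)]]|.

Definition degree n (S : {set 'I_n}) : nat :=
  2 * loops S + \sum_(T : {set 'I_n} | (T != set0) && (T != S)) edges S T.

(* Count the degree of S by ordered pairs (a, b) with a in S, a <> b and
   a + b Fibonacci: such a pair contributes one edge towards every vertex
   T <> S containing b, and, when b is in S, one half-loop at S.  Each pair
   thus counts once for each of the 2^(n-1) subsets containing b, so
   deg S = 2^(n-1) * #pairs, which is even as soon as n >= 2; for n = 1 there
   are no such pairs. *)
From mathcomp Require Import all_boot.

Set Implicit Arguments.
Unset Strict Implicit.
Unset Printing Implicit Defensive.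

Section SetCounting.

Variable T : finType.

Lemma card_sets_mem (x : T) : #|[set A : {set T} | x \in A]| = 2 ^ #|T|.-1.
Proof.
rewrite -(cardsC1 x) -card_powerset.
have -> : powerset [set~ x] = [set A :\ x | A in [set A : {set T} | x \in A]].
  apply/setP => B; rewrite inE; apply/idP/imsetP => [sBx | [A _ ->]].
    exists (x |: B); first by rewrite inE setU11.
    by rewrite setU1K //; apply/negP => /(subsetP sBx); rewrite !inE eqxx.
  by apply/subsetP => y; rewrite !inE => /andP [].
rewrite card_in_imset // => A1 A2; rewrite !inE => xA1 xA2 eqA.
by rewrite -(setD1K xA1) -(setD1K xA2) eqA.
Qed.

Lemma card_sets_mem_neq (S : {set T}) (x : T) :
  #|[set A : {set T} | (A != set0) && (A != S) && (x \in A)]| + (x \in S)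
  = 2 ^ #|T|.-1.
Proof.
rewrite -(card_sets_mem x) (cardD1 S [set A : {set T} | x \in A]) inE addnC.
congr (_ + _).
apply: eq_card => A; rewrite !inE.
have [-> | _] := eqVneq A S; first by rewrite !andbF.
by rewrite andbT; case: eqVneq => [->|]; rewrite ?in_set0.
Qed.

Variable r : rel T.

Definition arcs (S : {set T}) :=
  [set p : T * T | [&& p.1 \in S, p.1 != p.2 & r p.1 p.2]].

Definition arcs_between (S A : {set T}) :=
  [set p : T * T | [&& p.1 \in S, p.2 \in A, p.1 != p.2 & r p.1 p.2]].

Lemma card_arcs_between (S A : {set T}) :
  #|arcs_between S A| = \sum_(p in arcs S) (p.2 \in A).
Proof.
rewrite -sum1_card big_mkcond [RHS]big_mkcond; apply: eq_bigr => p _.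
by rewrite !inE; case: (p.1 \in S) (p.2 \in A) => [] [] //=; case: (_ && _).
Qed.

Lemma sum_card_arcs_between (S : {set T}) :
  \sum_(A : {set T} | (A != set0) && (A != S)) #|arcs_between S A|
    + #|arcs_between S S| = #|arcs S| * 2 ^ #|T|.-1.
Proof.
under eq_bigr do rewrite card_arcs_between.
rewrite exchange_big card_arcs_between -big_split -sum_nat_const.
apply: eq_bigr => p _; rewrite -(card_sets_mem_neq S p.2) -sum1_card.
rewrite big_mkcond [in RHS]big_mkcond /=; congr (_ + _); apply: eq_bigr => A _.
by rewrite inE; case: (_ && _); case: (p.2 \in A).
Qed.

Lemma arcs_card_le1 (S : {set T}) : #|T| <= 1 -> arcs S = set0.
Proof.
move=> /fintype_le1P T_singleton; apply/setP => p; rewrite !inE.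
by rewrite (T_singleton p.2 p.1) eqxx andbF.
Qed.

End SetCounting.

Lemma card_arcs_between_self n (r : rel 'I_n) (S : {set 'I_n}) :
  symmetric r ->
  #|arcs_between r S S|
    = 2 * #|[set p : 'I_n * 'I_n |
               [&& p.1 < p.2, p.1 \in S, p.2 \in S & r p.1 p.2]]|.
Proof.
move=> r_sym; set L := [set p | _].
pose B := [set p : 'I_n * 'I_n | p.1 < p.2].
have eL : arcs_between r S S :&: B = L.
  apply/setP => p; rewrite !inE; case: ltngtP; rewrite ?andbF ?andbT //= => lt12.
  by rewrite -val_eqE (ltn_eqF lt12); case: (p.1 \in S); case: (p.2 \in S).
rewrite -(cardsID B) eL mul2n -addnn; congr (_ + _).
have -> : arcs_between r S S :\: B = [set (p.2, p.1) | p in L].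
  apply/setP => -[a b]; rewrite !inE /=; apply/idP/imsetP.
    case/andP => b_le_a /and4P [aS bS ab rab]; exists (b, a) => //.
    by rewrite !inE /= ltn_neqAle eq_sym ab leqNgt b_le_a bS aS r_sym.
  case=> -[c d]; rewrite !inE /= => /and4P [lt_cd cS dS rcd] [-> ->].
  by rewrite -leqNgt ltnW // dS cS -val_eqE gtn_eqF // r_sym.
by rewrite card_imset // => -[a b] [c d] [-> ->].
Qed.

Definition fib_sum n (i j : 'I_n) : bool := inFib (elt i + elt j).

Lemma fib_sum_sym n : symmetric (@fib_sum n).
Proof. by move=> i j; rewrite /fib_sum addnC. Qed.

Lemma degreeE n (S : {set 'I_n}) :
  degree S = #|arcs (@fib_sum n) S| * 2 ^ n.-1.
Proof.
rewrite -[n in 2 ^ n.-1]card_ord -sum_card_arcs_between.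
by rewrite (card_arcs_between_self S (@fib_sum_sym n)) addnC.
Qed.

Theorem theorem2p7 (n : nat) : (1 <= n)%N ->
  forall S : {set 'I_n}, S != set0 -> ~~ odd (degree S).
Proof.
move=> _ S _; rewrite degreeE.
have [n_gt1 | n_le1] := ltnP 1 n.
  by rewrite oddM oddX -subn1 subn_eq0 leqNgt n_gt1 andbF.
by rewrite arcs_card_le1 ?cards0 ?card_ord.
Qed.
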